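(* Let $\Phi_D$ be a set of BS indices containing $0$, $\Psi_D=\Phi_D\setminus\{0\}$, $K\ge1$, $\tau_c>0$, $B_W>0$, and positive $p_{l'i},q_{l'i},\beta_{0l'i}$ ($l'\in\Phi_D$, $i=1,\dots,K$), with $k$ fixed, and define $$\mathrm{SIR}_{rp}=\frac{p_{0k}\beta_{00k}}{\frac1{\tau_c}\sum_{l'\in\Psi_D}\sum_{i=1}^K\frac{p_{l'i}q_{l'i}}{q_{0k}}\frac{\beta_{0l'i}^2}{\beta_{00k}}}.$$ The asymptotic ($M\to\infty$) regular-pilot rate $R^{a\text{-}rp}_{0k}=(1-\frac{\tau_p}{\tau_c})B_W\log_2\big(1+\frac{p_{0k}\beta_{00k}}{\frac1{\tau_p}\sum_{l'\in\Psi_D}\sum_{i=1}^K\frac{p_{l'i}q_{l'i}}{q_{0k}}\frac{\beta_{0l'i}^2}{\beta_{00k}}}\big)$, written as a function of $\zeta=\tau_p/\tau_c\in[0,1]$, is $f(\zeta)=B_W(1-\zeta)\log_2(1+\zeta\,\mathrm{SIR}_{rp})$. If $\mathrm{SIR}_{rp}>0$, then $f$ is concave on $[0,1]$ and its maximum over $[0,1]$ is attained at $$\zeta^{\max}=\frac{1}{\mathrm{SIR}_{rp}}\Big(\frac{1+\mathrm{SIR}_{rp}}{W\big((1+\mathrm{SIR}_{rp})e\big)}-1\Big)\in(0,1),$$ where $W$ is the Lambert $W$ function and $e$ is the base of the natural logarithm.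
   Context: The Lambert $W$ function is defined by $z=W(z)e^{W(z)}$ (principal branch for positive arguments). $\tau_p$ is the regular-pilot length, $\tau_c$ the coherence block length, $p_{l'i},q_{l'i}$ data and pilot powers of user $i$ in cell $l'$, $\beta_{0l'i}$ its large-scale fading coefficient to BS $0$. *)

From Stdlib Require Import Reals Lra List Arith ClassicalEpsilon.
Open Scope R_scope.

Definition lsum {A : Type} (s : list A) (F : A -> R) : R :=
  fold_right Rplus 0 (map F s).

Definition log2 (x : R) : R := ln x / ln 2.

(* Lambert W, principal branch: the w >= -1 with w e^w = z
   (unique for z >= -1/e, in particular for positive z). *)
Definition LambertW (z : R) : R :=
  epsilon (inhabits 0) (fun w => -1 <= w /\ w * exp w = z).

Definition PsiD (PhiD : list nat) : list nat :=
  filter (fun l => negb (Nat.eqb l 0)) PhiD.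

Definition users (K : nat) : list nat := seq 1 K.

(* Pilot contamination sum  sum_{l' in Psi_D} sum_{i=1}^K
   p_{l'i} q_{l'i}/q_{0k} * beta_{0l'i}^2 / beta_{00k};
   p l i, q l i, beta l i denote p_{li}, q_{li}, beta_{0li}. *)
Definition contam (PhiD : list nat) (K k : nat) (p q beta : nat -> nat -> R) : R :=
  lsum (PsiD PhiD) (fun l => lsum (users K) (fun i =>
     p l i * q l i / q 0%nat k * (beta l i ^ 2 / beta 0%nat k))).

Definition SIR_rp (PhiD : list nat) (K k : nat) (p q beta : nat -> nat -> R)
  (tau_c : R) : R :=
  p 0%nat k * beta 0%nat k / (/ tau_c * contam PhiD K k p q beta).

Definition rate_arp (PhiD : list nat) (K k : nat) (p q beta : nat -> nat -> R)
  (tau_c B_W tau_p : R) : R :=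
  (1 - tau_p / tau_c) * B_W *
  log2 (1 + p 0%nat k * beta 0%nat k / (/ tau_p * contam PhiD K k p q beta)).

Definition f_rp (B_W SIR zeta : R) : R := B_W * (1 - zeta) * log2 (1 + zeta * SIR).

Definition concave_on (a b : R) (g : R -> R) : Prop :=
  forall x y t, a <= x <= b -> a <= y <= b -> 0 <= t <= 1 ->
    t * g x + (1 - t) * g y <= g (t * x + (1 - t) * y).

(* Up to the positive factor B_W / ln 2, f is h(x) = (1 - x) ln(1 + x s).
   Since ln u <= u - 1, h lies below each of its tangent lines on [0, 1]; this
   gives concavity, and any point where h' vanishes is a global maximiser.
   Writing 1 + x s = (1 + s) / w, the equation h'(x) = 0 becomes
   ln w + w = ln(1 + s) + 1, i.e. w e^w = (1 + s) e, so w = W((1 + s) e);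
   as v e^v is increasing, 1 < w < 1 + s, which puts the maximiser in (0, 1). *)

From Pilot Require Import Defs.
From Stdlib Require Import Reals List Lra ClassicalEpsilon.
Open Scope R_scope.

Lemma ln_le_sub_1 (u : R) : 0 < u -> ln u <= u - 1.
Proof.
  intros Hu.
  destruct (Rle_or_lt (ln u) (u - 1)) as [Hle | Hlt]; [exact Hle |].
  apply exp_increasing in Hlt. rewrite exp_ln in Hlt by exact Hu.
  pose proof (exp_ineq1_le (u - 1)). lra.
Qed.

Lemma ln_sub_ln_le (a b : R) : 0 < a -> 0 < b -> ln b - ln a <= (b - a) / a.
Proof.
  intros Ha Hb.
  assert (Hba : 0 < b / a) by (apply Rdiv_lt_0_compat; assumption).
  replace (ln b) with (ln a + ln (b / a)).
  - pose proof (ln_le_sub_1 _ Hba).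
    replace ((b - a) / a) with (b / a - 1) by (field; lra). lra.
  - rewrite <- ln_mult by assumption. f_equal. field. lra.
Qed.

Lemma concave_on_of_tangent (a b : R) (g dg : R -> R) :
  (forall x y, a <= x <= b -> a <= y <= b -> g y <= g x + dg x * (y - x)) ->
  concave_on a b g.
Proof.
  intros Htan x y t Hx Hy Ht.
  set (m := t * x + (1 - t) * y).
  assert (Hm : a <= m <= b) by (unfold m; split; nra).
  pose proof (Htan m x Hm Hx) as Tx.
  pose proof (Htan m y Hm Hy) as Ty.
  assert (Hcomb : t * (x - m) + (1 - t) * (y - m) = 0) by (unfold m; ring).
  assert (t * g x <= t * (g m + dg m * (x - m))) by (apply Rmult_le_compat_l; lra).
  assert ((1 - t) * g y <= (1 - t) * (g m + dg m * (y - m)))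
    by (apply Rmult_le_compat_l; lra).
  nra.
Qed.

Definition h_rp (s x : R) : R := (1 - x) * ln (1 + x * s).

Definition dh_rp (s x : R) : R := s * (1 - x) / (1 + x * s) - ln (1 + x * s).

Lemma f_rp_h_rp (B s x : R) : f_rp B s x = B / ln 2 * h_rp s x.
Proof. unfold f_rp, h_rp, log2. field. pose proof ln_lt_2. lra. Qed.

Lemma h_rp_below_tangent (s x y : R) :
  0 <= s -> 0 <= x -> 0 <= y <= 1 -> h_rp s y <= h_rp s x + dh_rp s x * (y - x).
Proof.
  intros Hs Hx Hy. unfold h_rp, dh_rp.
  assert (Ax : 0 < 1 + x * s) by nra.
  assert (Ay : 0 < 1 + y * s) by nra.
  assert (Hln : (1 - y) * (ln (1 + y * s) - ln (1 + x * s))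
                <= (1 - y) * (s * (y - x) / (1 + x * s))).
  { apply Rmult_le_compat_l; [lra |].
    replace (s * (y - x)) with (1 + y * s - (1 + x * s)) by ring.
    now apply ln_sub_ln_le. }
  (* the gap to the tangent is then at most - s (y - x)^2 / (1 + x s) *)
  assert (Hgap : 0 <= s * (y - x) * (y - x) / (1 + x * s)).
  { apply Rle_mult_inv_pos; [| exact Ax].
    rewrite Rmult_assoc. apply Rmult_le_pos; [exact Hs | apply Rle_0_sqr]. }
  assert (Hid : (1 - y) * (s * (y - x) / (1 + x * s))
                - s * (1 - x) / (1 + x * s) * (y - x)
                = - (s * (y - x) * (y - x) / (1 + x * s))) by (field; lra).
  lra.
Qed.

Lemma f_rp_below_tangent (B s x y : R) :
  0 <= B -> 0 <= s -> 0 <= x -> 0 <= y <= 1 ->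
  f_rp B s y <= f_rp B s x + B / ln 2 * dh_rp s x * (y - x).
Proof.
  intros HB Hs Hx Hy. rewrite !f_rp_h_rp.
  assert (0 <= B / ln 2) by (apply Rle_mult_inv_pos; pose proof ln_lt_2; lra).
  pose proof (h_rp_below_tangent s x y Hs Hx Hy).
  rewrite Rmult_assoc, <- Rmult_plus_distr_l.
  now apply Rmult_le_compat_l.
Qed.

Lemma f_rp_concave (B s : R) : 0 <= B -> 0 <= s -> concave_on 0 1 (f_rp B s).
Proof.
  intros HB Hs. apply concave_on_of_tangent with (dg := fun x => B / ln 2 * dh_rp s x).
  intros x y Hx Hy. apply f_rp_below_tangent; lra.
Qed.

Lemma mul_exp_lt_compat (u v : R) : 0 <= u < v -> u * exp u < v * exp v.
Proof.
  intros Huv.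
  pose proof (exp_increasing _ _ (proj2 Huv)).
  pose proof (exp_pos u). nra.
Qed.

Lemma LambertW_spec (z : R) :
  0 < z -> -1 <= LambertW z /\ LambertW z * exp (LambertW z) = z.
Proof.
  intros Hz. unfold LambertW. apply epsilon_spec.
  assert (Hcont : continuity (fun v => v * exp v - z)).
  { apply continuity_minus.
    - apply continuity_mult.
      + apply derivable_continuous, derivable_id.
      + apply derivable_continuous, derivable_exp.
    - apply continuity_const. intros a b; reflexivity. }
  assert (Hez : 1 < exp z) by (pose proof (exp_ineq1 z); lra).
  destruct (IVT _ 0 z Hcont Hz) as [w [Hw Hw0]].
  - rewrite exp_0. lra.
  - nra.
  - exists w. split; lra.
Qed.

Lemma LambertW_pos (z : R) : 0 < z -> 0 < LambertW z.
Proof.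
  intros Hz. destruct (LambertW_spec z Hz) as [_ Hw].
  pose proof (exp_pos (LambertW z)). nra.
Qed.

Lemma lt_LambertW (a z : R) : 0 <= a -> a * exp a < z -> a < LambertW z.
Proof.
  intros Ha Haz.
  assert (Hz : 0 < z) by (pose proof (exp_pos a); nra).
  destruct (Rlt_or_le a (LambertW z)) as [Hlt | Hle]; [exact Hlt | exfalso].
  destruct (LambertW_spec z Hz) as [_ Hw].
  destruct (Rle_lt_or_eq_dec _ _ Hle) as [Hlt | Heq].
  - pose proof (mul_exp_lt_compat (LambertW z) a (conj (Rlt_le _ _ (LambertW_pos z Hz)) Hlt)).
    lra.
  - rewrite Heq in Hw. lra.
Qed.

Lemma LambertW_lt (b z : R) : 0 < z -> z < b * exp b -> LambertW z < b.
Proof.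
  intros Hz Hzb.
  destruct (Rlt_or_le (LambertW z) b) as [Hlt | Hle]; [exact Hlt | exfalso].
  destruct (LambertW_spec z Hz) as [_ Hw].
  assert (Hb : 0 < b) by (pose proof (exp_pos b); nra).
  destruct (Rle_lt_or_eq_dec _ _ Hle) as [Hlt | Heq].
  - pose proof (mul_exp_lt_compat b (LambertW z) (conj (Rlt_le _ _ Hb) Hlt)). lra.
  - rewrite <- Heq in Hw. lra.
Qed.

Lemma ln_LambertW (z : R) : 0 < z -> ln (LambertW z) + LambertW z = ln z.
Proof.
  intros Hz. destruct (LambertW_spec z Hz) as [_ Hw].
  pose proof (LambertW_pos z Hz). pose proof (exp_pos (LambertW z)).
  rewrite <- Hw at 3. rewrite ln_mult, ln_exp by assumption.
  reflexivity.
Qed.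

Lemma LambertW_bounds (s : R) :
  0 < s -> 1 < LambertW ((1 + s) * exp 1) < 1 + s.
Proof.
  intros Hs. pose proof (exp_pos 1).
  split.
  - apply lt_LambertW; [lra | nra].
  - apply LambertW_lt; [nra |].
    pose proof (exp_increasing 1 (1 + s) ltac:(lra)). nra.
Qed.

Definition zeta_max (s w : R) : R := / s * ((1 + s) / w - 1).

Lemma zeta_max_bounds (s w : R) : 0 < s -> 1 < w < 1 + s -> 0 < zeta_max s w < 1.
Proof.
  intros Hs Hw. unfold zeta_max.
  assert (H1 : 1 < (1 + s) / w).
  { apply (Rmult_lt_reg_r w); [lra |]. field_simplify; lra. }
  assert (H2 : (1 + s) / w < 1 + s).
  { apply (Rmult_lt_reg_r w); [lra |]. field_simplify; nra. }
  split.
  - apply Rmult_lt_0_compat; [apply Rinv_0_lt_compat |]; lra.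
  - apply (Rmult_lt_reg_l s); [exact Hs |].
    rewrite <- Rmult_assoc, Rinv_r by lra. lra.
Qed.

Lemma dh_rp_zeta_max (s w : R) :
  0 < s -> 0 < w -> ln w + w = ln (1 + s) + 1 -> dh_rp s (zeta_max s w) = 0.
Proof.
  intros Hs Hw Hln. unfold dh_rp.
  replace (1 + zeta_max s w * s) with ((1 + s) * / w) by (unfold zeta_max; field; lra).
  rewrite ln_mult, ln_Rinv by (try apply Rinv_0_lt_compat; lra).
  replace (s * (1 - zeta_max s w) / ((1 + s) * / w)) with (w - 1)
    by (unfold zeta_max; field; repeat split; lra).
  lra.
Qed.

(* [SIR_rp] divides by [contam]; with Rocq's [/ 0 = 0] a vanishing [contam]
   forces [SIR_rp = 0]. *)
Lemma contam_neq0_of_SIR_rp_pos PhiD K k p q beta tau_c :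
  0 < SIR_rp PhiD K k p q beta tau_c -> contam PhiD K k p q beta <> 0.
Proof.
  unfold SIR_rp. intros HS H0.
  rewrite H0, Rmult_0_r in HS. unfold Rdiv in HS. rewrite Rinv_0, Rmult_0_r in HS. lra.
Qed.

Lemma rate_arp_f_rp PhiD K k p q beta tau_c B_W tau_p :
  0 < tau_c -> 0 < tau_p -> contam PhiD K k p q beta <> 0 ->
  rate_arp PhiD K k p q beta tau_c B_W tau_p
  = f_rp B_W (SIR_rp PhiD K k p q beta tau_c) (tau_p / tau_c).
Proof.
  intros Htc Htp HC. unfold rate_arp, f_rp, SIR_rp.
  replace (p 0%nat k * beta 0%nat k / (/ tau_p * contam PhiD K k p q beta)) with
    (tau_p / tau_c * (p 0%nat k * beta 0%nat k / (/ tau_c * contam PhiD K k p q beta)))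
    by (field; repeat split; lra).
  ring.
Qed.

Theorem corollary3 (PhiD : list nat) (K k : nat) (p q beta : nat -> nat -> R)
  (tau_c B_W : R) :
  In 0%nat PhiD -> NoDup PhiD ->
  (1 <= K)%nat -> (1 <= k <= K)%nat ->
  0 < tau_c -> 0 < B_W ->
  (forall l i, In l PhiD -> (1 <= i <= K)%nat ->
     0 < p l i /\ 0 < q l i /\ 0 < beta l i) ->
  0 < SIR_rp PhiD K k p q beta tau_c ->
  let SIR := SIR_rp PhiD K k p q beta tau_c in
  let f := f_rp B_W SIR in
  let zmax := / SIR * ((1 + SIR) / LambertW ((1 + SIR) * exp 1) - 1) in
  (forall tau_p, 0 < tau_p <= tau_c ->
     rate_arp PhiD K k p q beta tau_c B_W tau_p = f (tau_p / tau_c)) /\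
  concave_on 0 1 f /\
  (0 < zmax < 1) /\
  (forall z, 0 <= z <= 1 -> f z <= f zmax).
Proof.
  intros _ _ _ _ Htc HB _ HS SIR f zmax.
  change zmax with (zeta_max SIR (LambertW ((1 + SIR) * exp 1))) in *.
  set (w := LambertW ((1 + SIR) * exp 1)) in *.
  assert (Hw : 1 < w < 1 + SIR) by now apply LambertW_bounds.
  assert (Hzmax : 0 < zmax < 1) by now apply zeta_max_bounds.
  assert (Hstat : dh_rp SIR zmax = 0).
  { apply dh_rp_zeta_max; [exact HS | lra |].
    unfold w. rewrite ln_LambertW, ln_mult, ln_exp by (pose proof (exp_pos 1); nra).
    reflexivity. }
  split; [| split; [| split]].
  - intros tau_p Htp. apply rate_arp_f_rp; [lra | lra |].
    exact (contam_neq0_of_SIR_rp_pos _ _ _ _ _ _ _ HS).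
  - apply f_rp_concave; lra.
  - exact Hzmax.
  - intros z Hz.
    pose proof (f_rp_below_tangent B_W SIR zmax z ltac:(lra) ltac:(lra) ltac:(lra) Hz) as T.
    rewrite Hstat, Rmult_0_r, Rmult_0_l, Rplus_0_r in T. exact T.
Qed.
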